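(* Let $n\ge 2$, $k\ge 1$, $M_1\in\mathbb N^+$ and $\mathbf C=(c_0,\dots,c_k)\in\{0,1\}^{k+1}$, and let $\gamma$ be Euler's constant. Let $P(O_{\mathbf C}(n,m+c_k-1))=O_{\mathbf C}(n,m+c_k-1)/n!^k$. (i) If $c_0=0$ and $M=\left\lceil ekc_1(\log(n-1)+\gamma)+\frac{e\pi^2}{6}\sum_{\beta=2}^k c_\beta\binom{k}{\beta}\right\rceil+M_1$, then $$\sum_{m=M+1}^{n}P(O_{\mathbf C}(n,m+c_k-1))\le \exp(-M_1).$$ (ii) If $c_0=1$ and $M'=\left\lceil ekc'_1(\log(n-1)+\gamma)+\frac{e\pi^2}{6}\sum_{\beta=2}^k c'_\beta\binom{k}{\beta}\right\rceil+M_1$, then $$\sum_{1\le m< n+1-M'}P(O_{\mathbf C}(n,m+c_k-1))\le \exp(-M_1).$$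
   Context: Fix integers $k\ge 1$, $n\ge 1$ and $\mathbf C=(c_0,\dots,c_k)\in\{0,1\}^{k+1}$; put $\mathbf C'=(1,\dots,1)-\mathbf C=(c'_0,\dots,c'_k)$. Consider $k$-tuples $(\pi_1,\dots,\pi_k)$ of permutations of $\{1,\dots,n\}$ (there are $n!^k$). A position $\alpha$ is a record of a permutation $\pi$ if $\pi(\alpha)<\pi(\alpha')$ for every $\alpha'<\alpha$ (position $1$ is always a record); equivalently records index the minimal elements of the points $(\alpha,\pi(\alpha))$ under strict componentwise domination. For a tuple, let $l_\alpha$ be the number of $\beta\in\{1,\dots,k\}$ for which $\alpha$ is a record of $\pi_\beta$. The $\mathbf C$ sequential optimization set of the tuple is $S=\{\alpha:c_{l_\alpha}=1\}$, with weight $|S|$. For an integer $m$, $O_{\mathbf C}(n,m)$ is the number of $k$-tuples whose weight equals $m$. Thus $\sum_{m>M}P(O_{\mathbf C}(n,m+c_k-1))$ is the probability that a uniformly random $k$-tuple has weight $>M+c_k-1$. $\log$ is the natural logarithm. *)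

From HB Require Import structures.
From mathcomp Require Import all_boot all_order all_algebra all_fingroup.
From mathcomp Require Import all_classical all_reals all_analysis.
Import Order.TTheory GRing.Theory Num.Theory.
Local Open Scope ring_scope.

(* Positions 1..n are represented by 'I_n (0-indexed); permutations by 'S_n. *)
Definition is_record (n : nat) (s : 'S_n) (i : 'I_n) : bool :=
  [forall j : 'I_n, (j < i)%N ==> (s i < s j)%N].

Definition lcount (n k : nat) (t : {ffun 'I_k -> 'S_n}) (a : 'I_n) : nat :=
  #|[set b : 'I_k | is_record n (t b) a]|.

Definition weight (n k : nat) (C : 'I_k.+1 -> bool) (t : {ffun 'I_k -> 'S_n}) : nat :=
  #|[set a : 'I_n | C (inord (lcount n k t a))]|.

Definition OC (n k : nat) (C : 'I_k.+1 -> bool) (m : nat) : nat :=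
  #|[set t : {ffun 'I_k -> 'S_n} | weight n k C t == m]|.

Definition POC (R : realType) (n k : nat) (C : 'I_k.+1 -> bool) (m : nat) : R :=
  (OC n k C m)%:R / ((n`!) ^ k)%:R.

Definition cR (R : realType) (k : nat) (C : 'I_k.+1 -> bool) (b : nat) : R :=
  (C (inord b) : nat)%:R.

Definition euler_gamma (R : realType) : R :=
  limn (fun N : nat => \sum_(i < N.+1) (i.+1%:R)^-1 - ln (N.+1%:R : R)).

Definition threshold (R : realType) (n k : nat) (c : nat -> R) (M1 : nat) : int :=
  Num.ceil (expR 1 * k%:R * c 1%N * (ln ((n - 1)%:R : R) + euler_gamma R)
            + expR 1 * pi ^+ 2 / 6%:R *
              \sum_(2 <= b < k.+1) c b * ('C(k, b))%:R) + M1%:Z.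

(* Chernoff bound.  For every T,
     #{t | weight t >= T + c_k} <= e^-(T + c_k) \sum_t e^(weight t),
   and e^(weight t) = \prod_a (1 + (e - 1) c_(l_a)).  Deleting the last
   position of each permutation leaves the records of the other positions
   unchanged, and the last position is a record exactly when the permutation
   takes its least value there; hence \sum_t \prod_a w (l_a) factorizes as
   \prod_(a < n) \sum_j C(k, j) a^(k - j) w j.  Bounding the factor of index a
   by (a + 1)^k exp((e - 1) \sum_j c_j C(k, j) / (a + 1)^j) and using c_0 = 0,
   \sum_(a = 2..n) 1/a <= 1/2 + log (n - 1), \sum_a a^-j <= 1 for j >= 2,
   gamma >= 3/2 - log 3 and 5/2 <= e <= 3, the resulting exponent is at most
   the real number whose ceiling defines the threshold.  Part (ii) is part (i)
   for the complementary vector C', whose weight is n minus that for C. *)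

From HB Require Import structures.
From mathcomp Require Import all_boot all_order all_algebra all_fingroup.
From mathcomp Require Import all_classical all_reals all_analysis.
From mathcomp Require Import ring lra zify.
Import Order.TTheory GRing.Theory Num.Theory.
Local Open Scope ring_scope.

Set Implicit Arguments.
Unset Strict Implicit.
Unset Printing Implicit Defensive.

Section RealEstimates.
Variable R : realType.

Lemma ln_le_subr1 (x : R) : 0 < x -> ln x <= x - 1.
Proof.
by move=> x0; have := @le_ln1Dx R (x - 1); rewrite [1 + _]addrC subrK; apply; lra.
Qed.

Lemma ln_natS_bounds (m : nat) :
  (m.+2%:R : R)^-1 <= ln (m.+2%:R : R) - ln m.+1%:R <= (m.+1%:R)^-1.
Proof.
have [x0 x10] : (0 : R) < m.+1%:R /\ (0 : R) < m.+2%:R by rewrite !ltr0n.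
have := ln_le_subr1 (divr_gt0 x0 x10); have := ln_le_subr1 (divr_gt0 x10 x0).
rewrite !ln_div ?posrE // -!natr1.
have m1_neq0 : (m%:R + 1 : R) != 0 by rewrite natr1 pnatr_eq0.
have m2_neq0 : (m%:R + 1 + 1 : R) != 0 by rewrite !natr1 pnatr_eq0.
have -> : (m%:R + 1 + 1) / (m%:R + 1) - 1 = (m%:R + 1 : R)^-1 by field.
have -> : (m%:R + 1) / (m%:R + 1 + 1) - 1 = - (m%:R + 1 + 1 : R)^-1 by field.
by move=> h1 h2; apply/andP; split; lra.
Qed.

Lemma expR1_ge : 5 / 2 <= expR 1 :> R.
Proof.
have -> : expR 1 = expR (8^-1 : R) ^+ 8 by rewrite -expRM_natr mulVf.
apply: (@le_trans _ _ ((9 / 8 : R) ^+ 8)); first by rewrite !exprS expr0; lra.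
rewrite ler_pXn2r ?nnegrE ?expR_ge0 //.
by have := expR_ge1Dx (8^-1 : R); lra.
Qed.

Lemma expR1_subr1_ge0 : 0 <= expR 1 - 1 :> R.
Proof. by rewrite subr_ge0 ltW // expR_gt1. Qed.

Lemma expR1_le3 : expR 1 <= 3 :> R.
Proof.
have -> : expR 1 = expR (6^-1 : R) ^+ 6 by rewrite -expRM_natr mulVf.
apply: (@le_trans _ _ ((6 / 5 : R) ^+ 6)); last by rewrite !exprS expr0; lra.
rewrite ler_pXn2r ?nnegrE ?expR_ge0 //.
(* [e^(1/6) = 1 / e^(-1/6) <= 1 / (1 - 1/6)] *)
move: (expR_ge1Dx (- 6^-1 : R)) (@expRxMexpNx_1 R 6^-1) (expR_gt0 (6^-1 : R)) => *.
nra.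
Qed.

Let harm (N : nat) : R := \sum_(i < N) (i.+1%:R : R)^-1.

Let harmS (N : nat) : harm N.+1 = harm N + (N.+1%:R : R)^-1.
Proof. by rewrite /harm big_ord_recr. Qed.

Let gamma_seq (N : nat) : R := harm N.+1 - ln N.+1%:R.

Lemma gamma_seq_nonincr : nonincreasing_seq gamma_seq.
Proof.
apply/nonincreasing_seqP => N.
(* [lra] needs the canonical order of [R] and an atom for [N.+2%:R^-1] *)
suff : gamma_seq N.+1 <= gamma_seq N by [].
rewrite /gamma_seq harmS; have /andP[h _] := ln_natS_bounds N.
by set c := (N.+2%:R : R)^-1 in h *; lra.
Qed.

Lemma gamma_seq_ge (N : nat) : 3 / 2 - ln 3 <= gamma_seq N.+1.
Proof.
suff low : 3 / 2 - ln 3 <= harm N.+2 - ln N.+3%:R.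
  apply: le_trans low _; rewrite /gamma_seq lerD2l lerN2.
  by rewrite ler_ln ?posrE ?ltr0n ?ler_nat.
elim: N => [|N IH]; first by rewrite !harmS /harm big_ord0; lra.
rewrite harmS; have /andP[_ h] := ln_natS_bounds N.+2.
by set c := (N.+3%:R : R)^-1 in h *; lra.
Qed.

Lemma euler_gamma_ge : 3 / 2 - ln 3 <= euler_gamma R.
Proof.
have ev_ge : \forall N \near \oo%classic, 3 / 2 - ln 3 <= gamma_seq N.
  by exists 1%N => // -[|N] //= _; exact: gamma_seq_ge.
apply: limr_ge (near_nonincreasing_is_cvgn _ ev_ge) ev_ge.
exact/nearW/gamma_seq_nonincr.
Qed.

Lemma harmonic_tail_le (n : nat) : (2 <= n)%N ->
  \sum_(2 <= a < n.+1) (a%:R : R)^-1 <= 2^-1 + ln (n - 1)%:R.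
Proof.
case: n => [|[|m]] // _; rewrite subSS subn0.
elim: m => [|m IH]; first by rewrite big_nat1 ln1 addr0.
rewrite big_nat_recr //=.
have /andP[le_inv _] := ln_natS_bounds m.
have : (m.+3%:R : R)^-1 <= (m.+2%:R)^-1 by rewrite lef_pV2 ?posrE ?ler_nat.
by set c := (m.+3%:R : R)^-1; set d := (m.+2%:R : R)^-1 in le_inv *; lra.
Qed.

(* The binding case is [n = 2], which needs [(e - 1) / 2 <= e (3/2 - ln 3)]. *)
Lemma harmonic_tail_le_gamma (n : nat) : (2 <= n)%N ->
  (expR 1 - 1) * \sum_(2 <= a < n.+1) (a%:R : R)^-1
    <= expR 1 * (ln (n - 1)%:R + euler_gamma R).
Proof.
move=> n2; have H := harmonic_tail_le n2.
have L0 : 0 <= ln (n - 1)%:R :> R by rewrite ln_ge0 // ler1n subn_gt0.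
have e0 : 0 < expR 1 :> R := expR_gt0 1.
have e52 := expR1_ge.
have eln3 : expR 1 * ln 3 <= 3 :> R.
  have := ln_le_subr1 (divr_gt0 (ltr0n R 3) e0).
  rewrite ln_div ?posrE ?ltr0n // expRK => h.
  have : ln 3 <= 3 / expR 1 :> R by lra.
  by rewrite ler_pdivlMr // mulrC.
have := euler_gamma_ge; nra.
Qed.

Lemma sum_inv_exp_le1 (n j : nat) : (2 <= j)%N ->
  \sum_(2 <= a < n.+1) (a%:R ^+ j : R)^-1 <= 1.
Proof.
move=> j2.
suff tel m : \sum_(2 <= a < m.+2) (a%:R ^+ j : R)^-1 <= 1 - (m.+1%:R)^-1.
  case: n => [|n]; first by rewrite big_geq.
  by apply: le_trans (tel n) _; rewrite lerBlDr lerDl invr_ge0 ler0n.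
elim: m => [|m IH]; first by rewrite big_geq // invr1 subrr.
rewrite big_nat_recr //=.
suff step : (m.+2%:R ^+ j : R)^-1 <= (m.+1%:R)^-1 - (m.+2%:R)^-1.
  by apply: le_trans (lerD IH step) _; rewrite addrA subrK.
have -> : (m.+1%:R : R)^-1 - (m.+2%:R)^-1 = (m.+1%:R * m.+2%:R)^-1.
  rewrite -!natr1; field.
  by rewrite !natr1 !pnatr_eq0.
rewrite lef_pV2 ?posrE ?exprn_gt0 ?mulr_gt0 ?ltr0n //.
apply: (@le_trans _ _ (m.+2%:R ^+ 2)); last by rewrite ler_eXn2l // ltr1n.
by rewrite expr2 ler_pM2r ?ltr0n // ler_nat.
Qed.

Lemma expR1_subr1_le_pi : expR 1 - 1 <= expR 1 * pi ^+ 2 / 6%:R :> R.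
Proof.
have pi2 := pi_ge2 R; have e3 := expR1_le3; have e0 := expR_gt0 (1 : R).
have : 4 <= pi ^+ 2 :> R by rewrite expr2; nra.
rewrite -mulrA; nra.
Qed.

End RealEstimates.

Lemma ltn_lift n (i : 'I_n.+1) (x y : 'I_n) : (lift i x < lift i y)%N = (x < y)%N.
Proof. by rewrite /= !ltnNge leq_bump2. Qed.

Lemma is_record_last n (s : 'S_n.+1) : is_record n.+1 s ord_max = (s ord_max == ord0).
Proof.
apply/forallP/eqP => [rec | s0 j].
  set j := (s^-1 ord0)%g; have sj : s j = ord0 by rewrite permKV.
  have : ~~ (j < n)%N by have := rec j; rewrite sj ltn0 implybF.
  rewrite -leqNgt => nj; rewrite -sj; congr (s _); apply/val_inj/eqP.
  by rewrite eqn_leq nj -ltnS ltn_ord.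
apply/implyP => jn; rewrite s0 lt0n.
apply: contraTneq jn => sj0.
have sj : s j = s ord_max by apply/val_inj => /=; rewrite s0 sj0.
by rewrite (perm_inj sj) ltnn.
Qed.

Lemma is_record_lift n v (s : 'S_n) a :
  is_record n.+1 (lift_perm ord_max v s) (lift ord_max a) = is_record n s a.
Proof.
apply/forallP/forallP => rec j.
  by have := rec (lift ord_max j); rewrite !lift_perm_lift !lift_max ltn_lift.
apply/implyP; case: (unliftP ord_max j) => [j' -> | ->]; rewrite !lift_max.
  by move=> ja; rewrite !lift_perm_lift ltn_lift (implyP (rec j')).
by rewrite ltnNge ltnW.
Qed.

Lemma lift_perm_inj n (i : 'I_n.+1) v v' (s s' : 'S_n) :
  lift_perm i v s = lift_perm i v' s' -> v = v' /\ s = s'.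
Proof.
move=> eq_lift; have evv' : v = v' by rewrite -(lift_perm_id i v s) eq_lift lift_perm_id.
split=> //; apply/permP => a; apply: (@lift_inj _ v).
by rewrite -(lift_perm_lift i) eq_lift lift_perm_lift evv'.
Qed.

Definition insert_last n k (p : {ffun 'I_k -> 'I_n.+1} * {ffun 'I_k -> 'S_n}) :
  {ffun 'I_k -> 'S_n.+1} := [ffun b => lift_perm ord_max (p.1 b) (p.2 b)].

Lemma insert_last_bij n k : bijective (@insert_last n k).
Proof.
apply: inj_card_bij; last by rewrite card_prod !card_ffun !card_ord !card_Sn factS expnMn.
move=> [v u] [v' u'] /ffunP eq_ins.
have eqb b : v b = v' b /\ u b = u' b.
  by have := eq_ins b; rewrite !ffunE => /lift_perm_inj.
by congr pair; apply/ffunP => b; case: (eqb b).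
Qed.

Lemma lcount_insert_last_max n k p :
  lcount n.+1 k (@insert_last n k p) ord_max = #|[set b | p.1 b == ord0]|.
Proof. by apply: eq_card => b; rewrite !inE ffunE is_record_last lift_perm_id. Qed.

Lemma lcount_insert_last_lift n k p a :
  lcount n.+1 k (@insert_last n k p) (lift ord_max a) = lcount n k p.2 a.
Proof. by apply: eq_card => b; rewrite !inE ffunE is_record_lift. Qed.

Lemma weight_negb n k (C : 'I_k.+1 -> bool) t :
  weight n k (fun i => ~~ C i) t = (n - weight n k C t)%N.
Proof.
rewrite /weight; set A := [set a | C _].
rewrite -[X in (X - _)%N](card_ord n) -(cardsC A) addKn.
by apply: eq_card => a; rewrite !inE.
Qed.

Section Counting.
Variable V : nmodType.

Lemma sum_set_card (T : finType) (G : nat -> V) :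
  \sum_(B : {set T}) G #|B| = \sum_(j < #|T|.+1) G j *+ 'C(#|T|, j).
Proof.
rewrite (partition_big (fun B : {set T} => inord #|B| : 'I_#|T|.+1) predT) //=.
apply: eq_bigr => j _; rewrite -card_draws -sumr_const.
apply: eq_big => [B | B /eqP <-]; last by rewrite inordK // ltnS max_card.
have Bk : (#|B| < #|T|.+1)%N by rewrite ltnS max_card.
rewrite inE; apply/eqP/eqP => [<- | eBj]; first by rewrite inordK.
by apply/val_inj => /=; rewrite inordK.
Qed.

Lemma card_ffun_preimage_eq (I T : finType) (z : T) (B : {set I}) :
  #|[set v : {ffun I -> T} | [set i | v i == z] == B]| = (#|T|.-1 ^ (#|I| - #|B|))%N.
Proof.
have -> : (#|I| - #|B|)%N = #|~: B| by rewrite -(cardsC B) addKn.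
rewrite -(cardC1 z) -(card_pffun_on z).
apply: eq_card => v.
rewrite !inE; apply/eqP/pffun_onP => [<- | [/supportP vz vnz]].
  split; first by apply/supportP => i; rewrite !inE negbK => /eqP.
  by move=> y /mapP[i]; rewrite mem_enum !inE => vi ->.
apply/setP => i; rewrite !inE; apply/eqP/idP => [vi | iB]; last by apply: vz; rewrite inE negbK.
apply: contraT; rewrite -finset.in_setC => iNB; have := vnz _ (fintype.image_f v iNB).
by rewrite inE vi eqxx.
Qed.

Lemma sum_ffun_card_preimage (I T : finType) (z : T) (w : nat -> V) :
  \sum_(v : {ffun I -> T}) w #|[set i | v i == z]|
    = \sum_(j < #|I|.+1) w j *+ ('C(#|I|, j) * #|T|.-1 ^ (#|I| - j))%N.
Proof.
rewrite (partition_big (fun v : {ffun I -> T} => [set i | v i == z]) predT) //=.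
rewrite (eq_bigr (fun B : {set I} => w #|B| *+ (#|T|.-1 ^ (#|I| - #|B|))%N)) => [|B _].
  rewrite (sum_set_card _ (fun j => w j *+ (#|T|.-1 ^ (#|I| - j))%N)).
  by apply: eq_bigr => j _; rewrite -mulrnA mulnC.
rewrite (eq_bigr (fun _ => w #|B|)) => [|v /eqP -> //].
rewrite sumr_const -(card_ffun_preimage_eq z B); congr (_ *+ _).
by apply: eq_card => v; rewrite inE.
Qed.

End Counting.

Lemma sum_card_preimage_le (U : finType) (W : U -> nat) (N : nat) (P Q : pred nat)
    (f : nat -> nat) :
  (forall m, P m -> Q (f m)) -> {in P &, injective f} ->
  (\sum_(m < N | P m) #|[set t | W t == f m]| <= #|[set t | Q (W t)]|)%N.
Proof.
move=> PQ f_inj; under eq_bigr do rewrite -sum1dep_card.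
rewrite -sum1dep_card (exchange_big_dep (fun t => Q (W t))) => [|m t Pm /eqP ->]; last exact: PQ.
apply: leq_sum => t _; rewrite sum1dep_card; apply/card_le1_eqP => m m'.
rewrite !inE => /andP[Pm /eqP Wm] /andP[Pm' /eqP Wm'].
by apply/val_inj/f_inj; rewrite ?unfold_in // -Wm -Wm'.
Qed.

Section RecordMoment.
Variable R : comPzSemiRingType.
Implicit Types (w : nat -> R) (n k : nat).

Definition lcount_moment w n k : R :=
  \sum_(t : {ffun 'I_k -> 'S_n}) \prod_(a < n) w (lcount n k t a).

Definition record_factor w k a : R := \sum_(j < k.+1) w j *+ ('C(k, j) * a ^ (k - j)).

Lemma lcount_moment0 w k : lcount_moment w 0 k = 1.
Proof.
rewrite /lcount_moment (eq_bigr (fun _ => 1)) => [|t _]; last by rewrite big_ord0.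
by rewrite sumr_const card_ffun card_Sn card_ord exp1n.
Qed.

Lemma lcount_momentS w n k :
  lcount_moment w n.+1 k = record_factor w k n * lcount_moment w n k.
Proof.
have -> : record_factor w k n = \sum_(v : {ffun 'I_k -> 'I_n.+1}) w #|[set b | v b == ord0]|.
  by rewrite sum_ffun_card_preimage !card_ord.
rewrite /lcount_moment (reindex (@insert_last n k)) /=; last exact/onW_bij/insert_last_bij.
rewrite big_distrl; under [RHS]eq_bigr do rewrite big_distrr.
rewrite pair_big /=; apply: eq_bigr => -[v u] _ /=.
rewrite big_ord_recr /= lcount_insert_last_max mulrC; congr (_ * _).
apply: eq_bigr => a _; rewrite -(lcount_insert_last_lift (v, u)); congr (w (lcount _ _ _ _)).
exact/val_inj/esym/lift_max.
Qed.

Lemma record_factor0 w k : record_factor w k 0 = w k.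
Proof.
rewrite /record_factor big_ord_recr /= subnn binn big1 ?add0r // => j _.
by rewrite exp0n ?muln0 // subn_gt0.
Qed.

End RecordMoment.

Section ChernoffBound.
Variable R : realType.

Definition tail_exponent k (c : nat -> R) n : R :=
  (expR 1 - 1) * \sum_(2 <= a < n.+1) \sum_(j < k.+1) c j * 'C(k, j)%:R / a%:R ^+ j.

Lemma tail_exponent_ge0 k (c : nat -> R) n : (forall j, 0 <= c j) -> 0 <= tail_exponent k c n.
Proof.
move=> c0; rewrite /tail_exponent mulr_ge0 ?expR1_subr1_ge0 //.
by do 2!apply: sumr_ge0 => ? _; rewrite divr_ge0 ?mulr_ge0 ?exprn_ge0.
Qed.

Lemma expR_bool (b : bool) : expR (b : nat)%:R = 1 + (expR 1 - 1) * (b : nat)%:R :> R.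
Proof. by case: b; rewrite ?expR0 ?mulr1 ?mulr0 ?addr0 // addrC subrK. Qed.

(* Since [e^b = 1 + (e - 1) b] for [b] in {0, 1}, the constant parts add up to
   [(a + 1)^k] by the binomial theorem; then [1 + y <= e^y]. *)
Lemma record_factor_expR_le (b : nat -> bool) k a :
  record_factor (fun j => expR (b j : nat)%:R) k a
    <= a.+1%:R ^+ k * expR ((expR 1 - 1) *
         \sum_(j < k.+1) (b j : nat)%:R * 'C(k, j)%:R / a.+1%:R ^+ j) :> R.
Proof.
set y := _ * \sum_(j < k.+1) _.
apply: (@le_trans _ _ (a.+1%:R ^+ k * (1 + y))); last first.
  by rewrite ler_wpM2l ?exprn_ge0 ?ler0n ?expR_ge1Dx.
rewrite /record_factor; under eq_bigr do rewrite expR_bool mulrnDl.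
rewrite big_split /= mulrDr mulr1; apply: lerD.
  rewrite -natrX -[a.+1]addn1 expnDn natr_sum; apply: ler_sum => j _.
  by rewrite exp1n muln1.
rewrite /y mulr_sumr mulr_sumr; apply: ler_sum => j _.
have jk : (j <= k)%N by rewrite -ltnS.
have le_pow : ('C(k, j) * a ^ (k - j) <= 'C(k, j) * a.+1 ^ (k - j))%N.
  by apply: leq_mul => //; case: (k - j)%N => // e; rewrite leq_exp2r.
apply: le_trans (ler_wpMn2l (mulr_ge0 (expR1_subr1_ge0 R) (ler0n _ _)) le_pow) _.
have N0 : a.+1%:R != 0 :> R by rewrite pnatr_eq0.
rewrite -[leLHS]mulr_natr natrM !natrX exprB ?unitfE // le_eqVlt; apply/orP; left.
by apply/eqP; field; rewrite expf_neq0.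
Qed.

Lemma tail_exponentS k (c : nat -> R) n : (1 <= n)%N ->
  tail_exponent k c n.+1
    = tail_exponent k c n + (expR 1 - 1) * \sum_(j < k.+1) c j * 'C(k, j)%:R / n.+1%:R ^+ j.
Proof. by move=> n1; rewrite /tail_exponent big_nat_recr //= mulrDr. Qed.

Lemma lcount_moment_expR_le (b : nat -> bool) n k : (1 <= n)%N ->
  lcount_moment (fun j => expR (b j : nat)%:R) n k
    <= (n`! ^ k)%:R * expR ((b k : nat)%:R + tail_exponent k (fun j => (b j : nat)%:R) n).
Proof.
case: n => // n _; elim: n => [|n IH].
  rewrite lcount_momentS lcount_moment0 record_factor0 mulr1 /tail_exponent big_geq //.
  by rewrite mulr0 addr0 [1`!]/= exp1n mul1r.
have factor0 : 0 <= record_factor (fun j => expR (b j : nat)%:R : R) k n.+1.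
  by apply: sumr_ge0 => j _; rewrite mulrn_wge0 ?expR_ge0.
have moment0 : 0 <= lcount_moment (fun j => expR (b j : nat)%:R : R) n.+1 k.
  by apply: sumr_ge0 => t _; apply: prodr_ge0 => a _; apply: expR_ge0.
rewrite lcount_momentS; apply: le_trans (ler_pM factor0 moment0 (record_factor_expR_le b k n.+1) IH) _.
rewrite (tail_exponentS k _ (ltn0Sn n)) addrA !expRD (factS n.+1) expnMn natrM !natrX.
by rewrite le_eqVlt; apply/orP; left; apply/eqP; ring.
Qed.

Lemma card_le_expR_sum (U : finType) (W : U -> nat) (T : nat) :
  #|[set t | (T <= W t)%N]|%:R * expR T%:R <= \sum_t expR (W t)%:R :> R.
Proof.
rewrite mulr_natl -sumr_const.
apply: (@le_trans _ _ (\sum_(t in [set t | (T <= W t)%N]) expR (W t)%:R)).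
  by apply: ler_sum => t; rewrite inE => TW; rewrite ler_expR ler_nat.
rewrite [leRHS](bigID (mem [set t | (T <= W t)%N])) /= lerDl.
by apply: sumr_ge0 => t _; exact: expR_ge0.
Qed.

Lemma sum_expR_weight n k (C : 'I_k.+1 -> bool) :
  \sum_t expR (weight n k C t)%:R
    = lcount_moment (fun j => expR (C (inord j) : nat)%:R) n k :> R.
Proof.
apply: eq_bigr => t _; rewrite /weight -sum1_card big_mkcond natr_sum expR_sum.
by apply: eq_bigr => a _; rewrite inE; case: (C _).
Qed.

Lemma card_weight_ge_le n k (C : 'I_k.+1 -> bool) (T : nat) : (1 <= n)%N ->
  #|[set t | (T + C ord_max <= weight n k C t)%N]|%:R
    <= (n`! ^ k)%:R * expR (tail_exponent k (cR R k C) n - T%:R).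
Proof.
move=> n1; have Ck : C (inord k) = C ord_max by congr C; apply/val_inj; rewrite /= inordK.
rewrite -(ler_pM2r (expR_gt0 (T + C ord_max)%:R)).
apply: le_trans (card_le_expR_sum (weight n k C) (T + C ord_max)) _.
rewrite sum_expR_weight.
apply: le_trans (lcount_moment_expR_le (fun j => C (inord j)) k n1) _.
rewrite Ck -mulrA -expRD natrD /=.
by rewrite le_eqVlt; apply/orP; left; apply/eqP; congr (_ * expR _); ring.
Qed.

End ChernoffBound.

Section Threshold.
Variable R : realType.

Definition threshold_real n k (c : nat -> R) : R :=
  expR 1 * k%:R * c 1%N * (ln ((n - 1)%:R : R) + euler_gamma R)
  + expR 1 * pi ^+ 2 / 6%:R * \sum_(2 <= b < k.+1) c b * ('C(k, b))%:R.

Lemma thresholdE n k (c : nat -> R) M1 :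
  threshold R n k c M1 = Num.ceil (threshold_real n k c) + M1%:Z.
Proof. by []. Qed.

Lemma tail_exponent_le_threshold n k (c : nat -> R) : (2 <= n)%N -> (1 <= k)%N ->
  c 0%N = 0 -> (forall j, 0 <= c j) -> tail_exponent k c n <= threshold_real n k c.
Proof.
move=> n2 k1 c0 c_ge0; have e1 := expR1_subr1_ge0 R.
rewrite /tail_exponent exchange_big /=.
rewrite -(big_mkord xpredT (fun j => \sum_(2 <= a < n.+1) c j * 'C(k, j)%:R / a%:R ^+ j)).
rewrite big_ltn // big_ltn //= big1 => [|a _]; last by rewrite c0 !mul0r.
rewrite add0r mulrDr /threshold_real; apply: lerD.
  have -> : \sum_(2 <= a < n.+1) c 1%N * 'C(k, 1)%:R / a%:R ^+ 1
          = c 1%N * k%:R * \sum_(2 <= a < n.+1) (a%:R)^-1.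
    by rewrite mulr_sumr; apply: eq_bigr => a _; rewrite bin1 expr1.
  have := ler_wpM2l (mulr_ge0 (c_ge0 1%N) (ler0n R k)) (harmonic_tail_le_gamma R n2).
  set H := \sum_(2 <= a < n.+1) _; set L := ln _ + _; lra.
apply: (@le_trans _ _ ((expR 1 - 1) * \sum_(2 <= b < k.+1) c b * 'C(k, b)%:R)).
  rewrite ler_wpM2l //; apply: ler_sum_nat => j /andP[j2 _].
  by rewrite -mulr_sumr -[leRHS]mulr1 ler_wpM2l ?mulr_ge0 // sum_inv_exp_le1.
rewrite ler_wpM2r ?expR1_subr1_le_pi //.
by apply: sumr_ge0 => b _; rewrite mulr_ge0.
Qed.

Lemma cR_negb k (C : 'I_k.+1 -> bool) :
  (fun b => 1 - cR R k C b) = cR R k (fun i => ~~ C i).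
Proof. by apply: funext => b; rewrite /cR; case: (C _); rewrite ?subrr ?subr0. Qed.

Lemma weight_tail_prob_le n k M1 (C : 'I_k.+1 -> bool) :
  (2 <= n)%N -> (1 <= k)%N -> C ord0 = false ->
  exists2 T : nat, threshold R n k (cR R k C) M1 = T%:Z &
    #|[set t | (T + C ord_max <= weight n k C t)%N]|%:R / (n`! ^ k)%:R
      <= expR (- M1%:R) :> R.
Proof.
move=> n2 k1 C0; set X := threshold_real n k (cR R k C).
have c_ge0 j : 0 <= cR R k C j := ler0n _ _.
have c0 : cR R k C 0 = 0 by rewrite /cR (_ : inord 0 = ord0) ?C0 //; exact/val_inj/inordK.
have tail_le : tail_exponent k (cR R k C) n <= X := tail_exponent_le_threshold n2 k1 c0 c_ge0.
have ceil_ge0 : 0 <= Num.ceil X.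
  by rewrite ceil_ge0 (lt_le_trans _ (le_trans (tail_exponent_ge0 _ _ c_ge0) tail_le)).
exists (`|Num.ceil X| + M1)%N; first by rewrite thresholdE PoszD gez0_abs.
have T_ge : X + M1%:R <= (`|Num.ceil X| + M1)%N%:R.
  by rewrite natrD lerD2r natr_absz ger0_norm // ceil_ge.
rewrite ler_pdivrMr ?ltr0n ?expn_gt0 ?fact_gt0 //.
apply: le_trans (card_weight_ge_le R C (`|Num.ceil X| + M1) (ltnW n2)) _.
by rewrite mulrC ler_wpM2r ?ler0n // ler_expR; lra.
Qed.

End Threshold.

Unset Implicit Arguments.

Theorem theorem5p2 (R : realType) (n k M1 : nat) (C : 'I_k.+1 -> bool) :
  (2 <= n)%N -> (1 <= k)%N -> (0 < M1)%N ->
  (* (i) *)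
  (C ord0 = false ->
    let M := threshold R n k (cR R k C) M1 in
    \sum_(m < n.+1 | M < (m : nat)%:Z) POC R n k C (m + C ord_max - 1)%N
      <= expR (- (M1%:R : R))) /\
  (* (ii) *)
  (C ord0 = true ->
    let M' := threshold R n k (fun b => 1 - cR R k C b) M1 in
    \sum_(m < n.+1 | (1 <= m)%N && ((m : nat)%:Z < n.+1%:Z - M'))
        POC R n k C (m + C ord_max - 1)%N
      <= expR (- (M1%:R : R))).
Proof.
move=> n2 k1 _; rewrite /POC /OC; split=> [C0 | C1] /=; rewrite -mulr_suml -natr_sum.
  have [T -> tail_le] := weight_tail_prob_le R M1 n2 k1 C0.
  apply: le_trans _ tail_le; rewrite ler_wpM2r ?invr_ge0 ?ler0n // ler_nat.
  apply: (@sum_card_preimage_le _ _ _ (fun m => T%:Z < m%:Z) (fun w => T + C ord_max <= w)%N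
    (fun m => m + C ord_max - 1)%N);
    by [move=> m /=; lia | move=> m1 m2; rewrite !unfold_in /=; lia].
have C'0 : ~~ C ord0 = false by rewrite C1.
have [T eT tail_le] := weight_tail_prob_le R M1 (C := fun i => ~~ C i) n2 k1 C'0.
rewrite cR_negb eT; apply: le_trans _ tail_le; rewrite ler_wpM2r ?invr_ge0 ?ler0n // ler_nat.
set S := [set t | _].
have -> : S = [set t | (T + ~~ C ord_max <= n - weight n k C t)%N].
  by apply/setP => t; rewrite !inE weight_negb.
apply: (@sum_card_preimage_le _ _ _ (fun m => (1 <= m)%N && (m%:Z < n.+1%:Z - T%:Z))
  (fun w => T + ~~ C ord_max <= n - w)%N (fun m => m + C ord_max - 1)%N);
  by [move=> m /=; case: (C ord_max); lia | move=> m1 m2; rewrite !unfold_in /=; lia].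
Qed.
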